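(* Let $(r_k)_{k\in\mathbb{N}}$ be a sequence of nonnegative reals with $r_1=1$, $\sum_{k=1}^\infty r_k<\infty$, such that $r_i=0$ implies $r_j=0$ for all $j\geq i$, and suppose there is a constant $c_0>0$ with $\sum_{k=M}^\infty r_k\leq c_0/M$ for all integers $M\geq2$. Let $g:[1,\infty)\to[0,\infty)$ be a continuous, strictly decreasing function with $\sum_{i=M}^\infty r_i\leq g(M)$ for all integers $M\ge2$ and $g(s)\leq c_0/s$ for all $s\in[1,\infty)$. Fix $d\ge1$ and a discrete probability measure $\mu=\sum_{i=1}^\infty\alpha_i\delta_{y_i}$ on $[0,1]^d$ ($y_i\in[0,1]^d$, $\alpha_i\ge0$, $\sum_i\alpha_i=1$, $\alpha_1>0$) with $\alpha_k\leq r_k\alpha_1$ for all $k$. Then for every integer $N\geq2$ such that $\frac{1}{N\alpha_1}$ lies in the range of $g$, there exist points $x_1^N,\dots,x_N^N\in[0,1]^d$ such that $\nu_N=\frac1N\sum_{i=1}^N\delta_{x_i^N}$ satisfies $$\rho(\mu;\nu_N)<(6c_0+3)\,\frac{g^{-1}\!\left(\frac{1}{N\alpha_1}\right)}{N}.$$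
   Context: $\delta_y$ denotes the Dirac measure at $y$. For probability measures $\mu,\nu$ on $[0,1]^d$, the total variation distance is $\rho(\mu;\nu)=\sup_{A}|\mu(A)-\nu(A)|$, the supremum taken over all Borel sets $A\subseteq[0,1]^d$. $g^{-1}$ denotes the inverse function of $g$. *)

From Stdlib Require Import Reals Lra List.
Open Scope R_scope.

(* Points of R^d are lists of length d; [in_cube d p] means p ∈ [0,1]^d. *)
Definition in_cube (d : nat) (p : list R) : Prop :=
  length p = d /\ Forall (fun t => 0 <= t <= 1) p.

(* A subset A of [0,1]^d is given by its (boolean) characteristic function. *)
Definition ind (A : list R -> bool) (p : list R) : R := if A p then 1 else 0.

Definition disc_measure_val (alpha : nat -> R) (y : nat -> list R)
  (A : list R -> bool) (m : R) : Prop :=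
  infinite_sum (fun i => alpha (S i) * ind A (y (S i))) m.

Definition empirical_val (N : nat) (x : nat -> list R) (A : list R -> bool) : R :=
  / INR N * sum_f_R0 (fun i => ind A (x (S i))) (N - 1).

(* rho = total variation distance sup_A |mu(A) - nu_N(A)|. *)
Definition is_tv_dist (alpha : nat -> R) (y : nat -> list R) (N : nat)
  (x : nat -> list R) (rho : R) : Prop :=
  is_lub (fun v => exists (A : list R -> bool) (m : R),
             disc_measure_val alpha y A m /\ v = Rabs (m - empirical_val N x A)) rho.

Definition continuous_on_ge1 (g : R -> R) : Prop :=
  forall s, 1 <= s -> forall eps, 0 < eps -> exists delta, 0 < delta /\
    forall t, 1 <= t -> Rabs (t - s) < delta -> Rabs (g t - g s) < eps.

From Pilot Require Import Defs.
From Stdlib Require Import Reals Lra Lia List ZArith.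
Open Scope R_scope.

(** Let K = ⌊s⌋.  Put ⌊N α_i⌋ points at y_i for 2 <= i <= K and all remaining
    points at y_1.  No atom other than y_1 is overfilled, so for every A the
    error |μ(A) - ν_N(A)| is at most the excess ν_N({y_1}) - α_1.  That excess
    is the sum of the rounding losses at y_2, ..., y_K (each below 1/N) and of
    the tail Σ_{i>K} α_i <= α_1 Σ_{i>K} r_i <= α_1 g(K+1) < α_1 g(s) = 1/N.
    Hence ρ(μ; ν_N) < K/N <= s/N, which is stronger than the claimed bound.
    Below, atoms are indexed from 0: [a i] is α_(i+1) and atom [0] is y_1. *)

Lemma infinite_sum_le (u v : nat -> R) (lu lv : R) :
  (forall i, u i <= v i) -> infinite_sum u lu -> infinite_sum v lv -> lu <= lv.
Proof.
  intros Huv Hu Hv.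
  apply Rle_cv_lim with (Un := sum_f_R0 u) (Vn := sum_f_R0 v); auto.
  intros n; apply sum_Rle; auto.
Qed.

Lemma infinite_sum_nonneg (u : nat -> R) (l : R) :
  (forall i, 0 <= u i) -> infinite_sum u l -> 0 <= l.
Proof.
  intros Hu Hl. apply Rle_trans with (sum_f_R0 u 0); [exact (Hu 0%nat)|].
  apply sum_incr; auto.
Qed.

Lemma infinite_sum_scal (u : nat -> R) (l c : R) :
  infinite_sum u l -> infinite_sum (fun i => c * u i) (c * l).
Proof.
  intros Hu.
  assert (Hc : Un_cv (fun _ => c) c).
  { intros eps Heps; exists 0%nat; intros n _.
    unfold Rdist; replace (c - c) with 0 by ring; rewrite Rabs_R0; lra. }
  intros eps Heps.
  destruct (CV_mult _ _ _ _ Hc Hu eps Heps) as [M HM].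
  exists M; intros n Hn.
  replace (sum_f_R0 (fun i => c * u i) n) with (c * sum_f_R0 u n); [exact (HM n Hn)|].
  rewrite scal_sum; apply sum_eq; intros; ring.
Qed.

Lemma infinite_sum_tail (u : nat -> R) (l : R) (n : nat) :
  infinite_sum u l -> infinite_sum (fun i => u (S n + i)%nat) (l - sum_f_R0 u n).
Proof.
  intros Hu eps Heps.
  destruct (Hu eps Heps) as [M HM].
  exists M; intros m Hm.
  assert (Hsplit := tech2 u n (S n + m) ltac:(lia)).
  replace (S n + m - S n)%nat with m in Hsplit by lia.
  specialize (HM (S n + m)%nat ltac:(lia)); unfold Rdist in *.
  replace (sum_f_R0 (fun i => u (S n + i)%nat) m - (l - sum_f_R0 u n))
    with (sum_f_R0 u (S n + m) - l) by lra.
  exact HM.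
Qed.

Lemma infinite_sum_tail_le_scal (u v : nat -> R) (lu lv c : R) (n : nat) :
  (forall i, u i <= c * v i) -> infinite_sum u lu -> infinite_sum v lv ->
  lu - sum_f_R0 u n <= c * (lv - sum_f_R0 v n).
Proof.
  intros Huv Hu Hv.
  apply (infinite_sum_le _ _ _ _ (fun i => Huv (S n + i)%nat)).
  - exact (infinite_sum_tail _ _ n Hu).
  - exact (infinite_sum_scal _ _ c (infinite_sum_tail _ _ n Hv)).
Qed.

Lemma sum_f_R0_le_first (f : nat -> R) (k : nat) (B : R) :
  (forall i, (1 <= i <= k)%nat -> f i <= B) -> sum_f_R0 f k <= f 0%nat + INR k * B.
Proof.
  induction k as [|k IH]; intros Hf; [simpl; lra|].
  rewrite tech5, S_INR.
  assert (sum_f_R0 f k <= f 0%nat + INR k * B) by (apply IH; intros; apply Hf; lia).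
  assert (f (S k) <= B) by (apply Hf; lia).
  lra.
Qed.

Lemma sum_f_R0_ge_first (f : nat -> R) (k : nat) :
  (forall i, (1 <= i <= k)%nat -> 0 <= f i) -> f 0%nat <= sum_f_R0 f k.
Proof.
  induction k as [|k IH]; intros Hf; [simpl; lra|].
  rewrite tech5.
  assert (f 0%nat <= sum_f_R0 f k) by (apply IH; intros; apply Hf; lia).
  assert (0 <= f (S k)) by (apply Hf; lia).
  lra.
Qed.

Lemma sum_f_R0_sub_first_eq (f g : nat -> R) (k : nat) :
  (forall i, (1 <= i <= k)%nat -> f i = g i) ->
  sum_f_R0 f k - f 0%nat = sum_f_R0 g k - g 0%nat.
Proof.
  induction k as [|k IH]; intros Hfg; [simpl; ring|].
  rewrite !tech5, (Hfg (S k)) by lia.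
  enough (sum_f_R0 f k - f 0%nat = sum_f_R0 g k - g 0%nat) by lra.
  apply IH; intros; apply Hfg; lia.
Qed.

Lemma INR_sum_nat_f_O (f : nat -> nat) (k : nat) :
  INR (sum_nat_f_O f k) = sum_f_R0 (fun i => INR (f i)) k.
Proof. induction k as [|k IH]; [reflexivity|]. simpl; rewrite plus_INR, IH; reflexivity. Qed.

Lemma ind_bounds (A : list R -> bool) (p : list R) : 0 <= Defs.ind A p <= 1.
Proof. unfold Defs.ind; destruct (A p); lra. Qed.

Fixpoint count_in (A : list R -> bool) (l : list (list R)) : R :=
  match l with
  | nil => 0
  | p :: l' => Defs.ind A p + count_in A l'
  end.

Lemma count_in_app (A : list R -> bool) (l1 l2 : list (list R)) :
  count_in A (l1 ++ l2) = count_in A l1 + count_in A l2.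
Proof. induction l1 as [|p l1 IH]; simpl; [ring|]. rewrite IH; ring. Qed.

Lemma count_in_repeat (A : list R -> bool) (p : list R) (n : nat) :
  count_in A (repeat p n) = INR n * Defs.ind A p.
Proof. induction n as [|n IH]; simpl count_in; [simpl; ring|]. rewrite IH, S_INR; ring. Qed.

Lemma count_in_true (l : list (list R)) : count_in (fun _ => true) l = INR (length l).
Proof. induction l as [|p l IH]; simpl count_in; [reflexivity|]. rewrite IH; cbn [length]; rewrite S_INR; unfold Defs.ind; simpl; ring. Qed.

Lemma sum_f_R0_nth_count_in (A : list R -> bool) (l : list (list R)) (d : list R) :
  l <> nil -> sum_f_R0 (fun i => Defs.ind A (nth i l d)) (pred (length l)) = count_in A l.
Proof.
  induction l as [|p l IH]; intros Hl; [congruence|].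
  destruct l as [|q l]; [simpl; ring|].
  change (count_in A (p :: q :: l)) with (Defs.ind A p + count_in A (q :: l)).
  cbn [length pred]. rewrite decomp_sum by lia.
  rewrite <- IH by discriminate. reflexivity.
Qed.

Lemma empirical_val_nth (N : nat) (l : list (list R)) (d : list R) (A : list R -> bool) :
  length l = N -> (1 <= N)%nat ->
  empirical_val N (fun j => nth (pred j) l d) A = count_in A l / INR N.
Proof.
  intros Hlen HN. unfold empirical_val.
  replace (N - 1)%nat with (pred (length l)) by lia.
  rewrite <- (sum_f_R0_nth_count_in A l d) by (intros ->; simpl in Hlen; lia).
  unfold Rdiv; apply Rmult_comm.
Qed.

Definition atom_list (b : nat -> list R) (c : nat -> nat) (k : nat) : list (list R) :=
  flat_map (fun i => repeat (b i) (c i)) (seq 0 (S k)).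

Lemma count_in_atom_list (A : list R -> bool) (b : nat -> list R) (c : nat -> nat) (k : nat) :
  count_in A (atom_list b c k) = sum_f_R0 (fun i => INR (c i) * Defs.ind A (b i)) k.
Proof.
  unfold atom_list; induction k as [|k IH].
  - simpl flat_map; rewrite app_nil_r, count_in_repeat; reflexivity.
  - rewrite seq_S, flat_map_app, count_in_app, IH, tech5.
    simpl flat_map; rewrite app_nil_r, count_in_repeat; reflexivity.
Qed.

Lemma length_atom_list (b : nat -> list R) (c : nat -> nat) (k : nat) :
  INR (length (atom_list b c k)) = sum_f_R0 (fun i => INR (c i)) k.
Proof.
  rewrite <- count_in_true, count_in_atom_list.
  apply sum_eq; intros; unfold Defs.ind; simpl; ring.
Qed.

Lemma atom_list_nth_prop (P : list R -> Prop) (b : nat -> list R) (c : nat -> nat) (k j : nat) :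
  (forall i, P (b i)) -> P (nth j (atom_list b c k) (b 0%nat)).
Proof.
  intros Hb.
  destruct (nth_in_or_default j (atom_list b c k) (b 0%nat)) as [Hin | ->]; [|apply Hb].
  apply in_flat_map in Hin as [i [_ Hi]].
  apply repeat_spec in Hi as ->; apply Hb.
Qed.

Section Quantization.

Variables (a : nat -> R) (b : nat -> list R).
Hypothesis a_nonneg : forall i, 0 <= a i.
Hypothesis a_sum : infinite_sum a 1.

Lemma weighted_tail_bounds (w : nat -> R) (m : R) (k : nat) :
  (forall i, 0 <= w i <= 1) -> infinite_sum (fun i => a i * w i) m ->
  0 <= m - sum_f_R0 (fun i => a i * w i) k <= 1 - sum_f_R0 a k.
Proof.
  intros Hw Hm; split.
  - refine (infinite_sum_nonneg _ _ _ (infinite_sum_tail _ _ k Hm)).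
    intros i; specialize (Hw (S k + i)%nat); specialize (a_nonneg (S k + i)%nat); nra.
  - replace (1 - sum_f_R0 a k) with (1 * (1 - sum_f_R0 a k)) by ring.
    refine (infinite_sum_tail_le_scal _ _ _ _ _ _ (fun i => _) Hm a_sum).
    specialize (Hw i); specialize (a_nonneg i); nra.
Qed.

Lemma tv_error_atom_list (c : nat -> nat) (N k : nat) (A : list R -> bool) (m : R) :
  (1 <= N)%nat -> sum_f_R0 (fun i => INR (c i)) k = INR N ->
  (forall i, (1 <= i <= k)%nat -> INR (c i) <= INR N * a i) ->
  infinite_sum (fun i => a i * Defs.ind A (b i)) m ->
  Rabs (m - count_in A (atom_list b c k) / INR N) <= INR (c 0%nat) / INR N - a 0%nat.
Proof.
  intros HN Hc Hunder Hm.
  assert (HNpos : 0 < INR N) by (apply lt_0_INR; lia).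
  rewrite count_in_atom_list.
  pose (chi := fun i => Defs.ind A (b i)).
  change (fun i => a i * Defs.ind A (b i)) with (fun i => a i * chi i) in Hm.
  change (fun i => INR (c i) * Defs.ind A (b i)) with (fun i => INR (c i) * chi i).
  set (D := fun i => a i - INR (c i) / INR N).
  assert (Hchi : forall i, 0 <= chi i <= 1) by (intros; unfold chi; apply ind_bounds).
  destruct (weighted_tail_bounds chi m k Hchi Hm) as [Hmass_lo Hmass_hi].
  assert (HDchi : sum_f_R0 (fun i => D i * chi i) k =
                  sum_f_R0 (fun i => a i * chi i) k - sum_f_R0 (fun i => INR (c i) * chi i) k / INR N).
  { unfold Rdiv; rewrite Rmult_comm, scal_sum, <- minus_sum.
    apply sum_eq; intros; unfold D, Rdiv; ring. }
  assert (HD : sum_f_R0 D k = sum_f_R0 a k - 1).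
  { unfold D, Rdiv; rewrite minus_sum, <- scal_sum, Hc, Rinv_l by lra; ring. }
  assert (HD1chi : sum_f_R0 (fun i => D i * (1 - chi i)) k =
                   sum_f_R0 D k - sum_f_R0 (fun i => D i * chi i) k).
  { rewrite <- minus_sum; apply sum_eq; intros; ring. }
  assert (HD_pos : forall i, (1 <= i <= k)%nat -> 0 <= D i).
  { intros i Hi; specialize (Hunder i Hi); unfold D.
    enough (INR (c i) / INR N <= a i) by lra.
    apply (Rmult_le_reg_l (INR N)); [lra|].
    unfold Rdiv; rewrite <- Rmult_assoc, Rinv_r_simpl_m by lra; exact Hunder. }
  assert (HD0 : D 0%nat <= sum_f_R0 D k) by (apply sum_f_R0_ge_first; exact HD_pos).
  assert (HD0chi : D 0%nat * chi 0%nat <= sum_f_R0 (fun i => D i * chi i) k).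
  { apply (sum_f_R0_ge_first (fun i => D i * chi i)); intros i Hi.
    specialize (HD_pos i Hi); specialize (Hchi i); nra. }
  assert (HD01chi : D 0%nat * (1 - chi 0%nat) <= sum_f_R0 (fun i => D i * (1 - chi i)) k).
  { apply (sum_f_R0_ge_first (fun i => D i * (1 - chi i))); intros i Hi.
    specialize (HD_pos i Hi); specialize (Hchi i); nra. }
  (* [m - ν(A)] lies between [Σ D_i χ_i] and [- Σ D_i (1 - χ_i)]; both sums are
     dominated by their [i = 0] term, the only one that can be negative. *)
  replace (INR (c 0%nat) / INR N - a 0%nat) with (- D 0%nat) by (unfold D; ring).
  assert (HD0_neg : D 0%nat <= 0) by lra.
  specialize (Hchi 0%nat).
  assert (D 0%nat <= D 0%nat * chi 0%nat <= 0) by (split; nra).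
  apply Rabs_le; split; lra.
Qed.

End Quantization.

Definition nfloor (x : R) : nat := Z.to_nat (Int_part x).

Lemma nfloor_spec (x : R) : 0 <= x -> INR (nfloor x) <= x < INR (nfloor x) + 1.
Proof.
  intros Hx. destruct (base_Int_part x) as [H1 H2].
  assert (Hz : (0 <= Int_part x)%Z).
  { apply Z.lt_succ_r, lt_IZR; rewrite succ_IZR; lra. }
  unfold nfloor; rewrite INR_IZR_INZ, Z2Nat.id by exact Hz; lra.
Qed.

Definition floor_counts (a : nat -> R) (N i : nat) : nat :=
  match i with
  | O => O
  | S _ => nfloor (INR N * a i)
  end.

Definition atom_counts (a : nat -> R) (N k i : nat) : nat :=
  match i with
  | O => N - sum_nat_f_O (floor_counts a N) k
  | S _ => floor_counts a N i
  end.

Section Counts.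

Variable a : nat -> R.
Hypothesis a_nonneg : forall i, 0 <= a i.
Hypothesis a_sum : infinite_sum a 1.
Variables N k : nat.
Hypothesis N_pos : (1 <= N)%nat.

Let N_gt0 : 0 < INR N.
Proof. apply lt_0_INR; lia. Qed.

Lemma floor_counts_le (i : nat) : INR (floor_counts a N i) <= INR N * a i.
Proof.
  destruct i as [|i]; simpl floor_counts.
  - specialize (a_nonneg 0%nat); simpl; nra.
  - apply nfloor_spec; specialize (a_nonneg (S i)); nra.
Qed.

Lemma floor_counts_loss_le (i : nat) : (1 <= i)%nat -> a i - INR (floor_counts a N i) / INR N <= / INR N.
Proof.
  intros Hi; destruct i as [|i]; [lia|]; simpl floor_counts.
  assert (H := nfloor_spec (INR N * a (S i)) ltac:(specialize (a_nonneg (S i)); nra)).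
  apply (Rmult_le_reg_l (INR N)); [exact N_gt0|].
  unfold Rdiv; rewrite Rmult_minus_distr_l, <- Rmult_assoc, Rinv_r_simpl_m, Rinv_r by lra.
  lra.
Qed.

Lemma sum_floor_counts_le : (sum_nat_f_O (floor_counts a N) k <= N)%nat.
Proof.
  apply INR_le; rewrite INR_sum_nat_f_O.
  apply Rle_trans with (sum_f_R0 (fun i => INR N * a i) k).
  - apply sum_Rle; intros; apply floor_counts_le.
  - replace (sum_f_R0 (fun i => INR N * a i) k) with (INR N * sum_f_R0 a k)
      by (rewrite scal_sum; apply sum_eq; intros; ring).
    assert (sum_f_R0 a k <= 1) by (apply sum_incr; auto).
    nra.
Qed.

Lemma sum_atom_counts : sum_f_R0 (fun i => INR (atom_counts a N k i)) k = INR N.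
Proof.
  assert (Hrest := sum_f_R0_sub_first_eq
            (fun i => INR (atom_counts a N k i)) (fun i => INR (floor_counts a N i)) k).
  specialize (Hrest ltac:(intros [|i] Hi; [lia|reflexivity])).
  cbn [atom_counts floor_counts] in Hrest.
  rewrite minus_INR, INR_sum_nat_f_O in Hrest by exact sum_floor_counts_le.
  simpl INR in Hrest; lra.
Qed.

Lemma atom_counts_le (i : nat) : (1 <= i)%nat -> INR (atom_counts a N k i) <= INR N * a i.
Proof. intros Hi; destruct i as [|i]; [lia|]; apply floor_counts_le. Qed.

Lemma atom_counts_excess :
  INR (atom_counts a N k 0) / INR N - a 0%nat <= INR k / INR N + (1 - sum_f_R0 a k).
Proof.
  assert (H := sum_f_R0_le_first (fun i => a i - INR (floor_counts a N i) / INR N) k (/ INR N)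
                 (fun i Hi => floor_counts_loss_le i (proj1 Hi))).
  unfold Rdiv in H; rewrite minus_sum, <- scal_sum in H; cbn [floor_counts] in H.
  cbn [atom_counts]; rewrite minus_INR, INR_sum_nat_f_O by exact sum_floor_counts_le.
  unfold Rdiv; rewrite Rmult_minus_distr_r, Rinv_r by lra.
  simpl INR in H; lra.
Qed.

End Counts.

Lemma tv_dist_le (alpha : nat -> R) (y : nat -> list R) (N : nat) (x : nat -> list R) (E : R) :
  (forall A m, disc_measure_val alpha y A m -> Rabs (m - empirical_val N x A) <= E) ->
  exists rho, is_tv_dist alpha y N x rho /\ rho <= E.
Proof.
  intros Hbound.
  assert (Hempty : disc_measure_val alpha y (fun _ => false) 0).
  { intros eps Heps; exists 0%nat; intros n _.
    rewrite (sum_eq _ (fun _ => 0)) by (intros; unfold Defs.ind; simpl; ring).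
    unfold Rdist; rewrite sum_cte, Rmult_0_l, Rminus_0_r, Rabs_R0; lra. }
  destruct (completeness (fun v => exists A m,
                disc_measure_val alpha y A m /\ v = Rabs (m - empirical_val N x A)))
    as [rho Hrho].
  - exists E; intros v (A & m & Hm & ->); auto.
  - exists (Rabs (0 - empirical_val N x (fun _ => false))), (fun _ => false), 0; auto.
  - exists rho; split; [exact Hrho|].
    apply Hrho; intros v (A & m & Hm & ->); auto.
Qed.

Lemma tail_mass_lt_inv (r alpha : nat -> R) (g : R -> R) (N k : nat) (s : R) :
  (exists l, infinite_sum (fun i => r (S i)) l) ->
  (forall s t, 1 <= s -> s < t -> g t < g s) ->
  (forall M : nat, (2 <= M)%nat -> forall t,
      infinite_sum (fun i => r (M + i)%nat) t -> t <= g (INR M)) ->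
  infinite_sum (fun i => alpha (S i)) 1 ->
  (forall i, (1 <= i)%nat -> alpha i <= r i * alpha 1%nat) ->
  0 < alpha 1%nat -> 0 < INR N -> g s = / (INR N * alpha 1%nat) ->
  1 <= s -> s < INR (S k) + 1 ->
  1 - sum_f_R0 (fun i => alpha (S i)) k < / INR N.
Proof.
  intros [lr Hlr] Hg_decr Hg_tail Halpha_sum Halpha_r Halpha1 HNpos Hgs Hs Hsk.
  assert (Hmass_tail : 1 - sum_f_R0 (fun i => alpha (S i)) k
                       <= alpha 1%nat * (lr - sum_f_R0 (fun i => r (S i)) k)).
  { apply infinite_sum_tail_le_scal; [|exact Halpha_sum|exact Hlr].
    intros i; rewrite Rmult_comm; apply Halpha_r; lia. }
  assert (Hr_tail_g : lr - sum_f_R0 (fun i => r (S i)) k <= g (INR (S (S k))))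
    by (apply Hg_tail; [lia|exact (infinite_sum_tail _ _ k Hlr)]).
  assert (Hg_lt : g (INR (S (S k))) < g s) by (apply Hg_decr; [lra|rewrite S_INR; lra]).
  replace (/ INR N) with (alpha 1%nat * g s) by (rewrite Hgs; field; lra).
  nra.
Qed.

Theorem theorem2p3
  (r : nat -> R) (c0 : R) (g : R -> R) (d : nat)
  (alpha : nat -> R) (y : nat -> list R)
  (Hr_nonneg : forall k, (1 <= k)%nat -> 0 <= r k)
  (Hr1 : r 1%nat = 1)
  (Hr_sum : exists l, infinite_sum (fun k => r (S k)) l)
  (Hr_zero : forall i j, (1 <= i)%nat -> (i <= j)%nat -> r i = 0 -> r j = 0)
  (Hc0 : 0 < c0)
  (Hr_tail : forall M : nat, (2 <= M)%nat -> forall t,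
      infinite_sum (fun k => r (M + k)%nat) t -> t <= c0 / INR M)
  (Hg_nonneg : forall s, 1 <= s -> 0 <= g s)
  (Hg_cont : continuous_on_ge1 g)
  (Hg_decr : forall s t, 1 <= s -> s < t -> g t < g s)
  (Hg_tail : forall M : nat, (2 <= M)%nat -> forall t,
      infinite_sum (fun k => r (M + k)%nat) t -> t <= g (INR M))
  (Hg_bound : forall s, 1 <= s -> g s <= c0 / s)
  (Hd : (1 <= d)%nat)
  (Hy : forall i, (1 <= i)%nat -> in_cube d (y i))
  (Halpha_nonneg : forall i, (1 <= i)%nat -> 0 <= alpha i)
  (Halpha_sum : infinite_sum (fun i => alpha (S i)) 1)
  (Halpha1 : 0 < alpha 1%nat)
  (Halpha_r : forall k, (1 <= k)%nat -> alpha k <= r k * alpha 1%nat) :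
  forall (N : nat), (2 <= N)%nat ->
  forall s, 1 <= s -> g s = / (INR N * alpha 1%nat) ->
  (* s = g^{-1}(1/(N alpha_1)) *)
  exists x : nat -> list R,
    (forall i, (1 <= i <= N)%nat -> in_cube d (x i)) /\
    exists rho, is_tv_dist alpha y N x rho /\
      rho < (6 * c0 + 3) * (s / INR N).
Proof.
  intros N HN s Hs Hgs.
  assert (HNpos : 0 < INR N) by (apply lt_0_INR; lia).
  set (a := fun i => alpha (S i)).
  assert (a_nonneg : forall i, 0 <= a i) by (intros; apply Halpha_nonneg; lia).
  destruct (nfloor_spec s ltac:(lra)) as [HK1 HK2].
  destruct (nfloor s) as [|k] eqn:HK; [simpl in HK2; lra|].
  set (pts := atom_list (fun i => y (S i)) (atom_counts a N k) k).
  assert (Hlen : length pts = N).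
  { apply INR_eq; unfold pts; rewrite length_atom_list; apply sum_atom_counts; auto; lia. }
  exists (fun j => nth (pred j) pts (y 1%nat)); split.
  { intros i _; apply (atom_list_nth_prop (in_cube d)); intros; apply Hy; lia. }
  set (E := INR (atom_counts a N k 0) / INR N - a 0%nat).
  assert (Herror : forall A m, disc_measure_val alpha y A m ->
            Rabs (m - empirical_val N (fun j => nth (pred j) pts (y 1%nat)) A) <= E).
  { intros A m Hm; rewrite empirical_val_nth by (auto; lia).
    apply tv_error_atom_list; auto; try lia.
    - apply sum_atom_counts; auto; lia.
    - intros; apply atom_counts_le; auto; lia. }
  destruct (tv_dist_le _ _ _ _ _ Herror) as [rho [Hrho Hrho_E]].
  exists rho; split; [exact Hrho|].
  assert (Hmass_tail := tail_mass_lt_inv r alpha g N k s Hr_sum Hg_decr Hg_tail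
                          Halpha_sum Halpha_r Halpha1 HNpos Hgs ltac:(lra) HK2).
  fold a in Hmass_tail.
  assert (HE : E < INR (S k) / INR N).
  { assert (Hexcess := atom_counts_excess a a_nonneg Halpha_sum N k ltac:(lia)).
    unfold E; rewrite S_INR; unfold Rdiv in *; lra. }
  assert (Hs_N : INR (S k) / INR N <= s / INR N)
    by (apply Rmult_le_compat_r; [apply Rlt_le, Rinv_0_lt_compat|]; lra).
  assert (0 < s / INR N) by (apply Rdiv_lt_0_compat; lra).
  nra.
Qed.
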